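(* Let $\alpha>\beta\geq 1$ be two real numbers such that $\alpha/\beta\notin\mathbb{N}$ and $[\alpha,\beta]\le \alpha/\beta$. Then there are no solutions to the equation $m\alpha=n\beta$ with $m$ and $n$ natural numbers such that $P^-(m)>\alpha$.
   Context: Height: for irrational $\rho>0$, $H(\rho)=\infty$; for $\rho=a/q$ with $a,q\in\mathbb{N}$, $\gcd(a,q)=1$, $H(\rho)=\max\{a,q\}$. Bracket: $[\alpha,\beta]=H(\alpha/\beta)/\max\{\alpha,\beta\}$. $P^-(n)$ denotes the smallest prime factor of $n\in\mathbb{N}$, with $P^-(1)=\infty$. *)

From HB Require Import structures.
From mathcomp Require Import all_boot all_order all_algebra.
From mathcomp Require Import boolp classical_sets reals constructive_ereal.
Set Implicit Arguments. Unset Strict Implicit. Unset Printing Implicit Defensive.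
Import Order.TTheory GRing.Theory Num.Theory.
Local Open Scope ring_scope.
Local Open Scope classical_set_scope.

Definition reduced_rep (R : realType) (rho : R) : set (nat * nat) :=
  [set p | (0 < p.1)%N /\ (0 < p.2)%N /\ coprime p.1 p.2 /\
           rho = p.1%:R / p.2%:R].

(* Height H(rho): max{a,q} if rho = a/q in lowest terms, +oo otherwise
   (i.e. for irrational rho; the paper only uses rho > 0). *)
Definition height (R : realType) (rho : R) : \bar R :=
  if pselect (exists p, reduced_rep rho p) then
    let p := xget (0%N, 0%N) (reduced_rep rho) in ((maxn p.1 p.2)%:R)%:E
  else +oo%E.

Definition bracket (R : realType) (alpha beta : R) : \bar R :=
  (height (alpha / beta) * ((Num.max alpha beta)^-1)%:E)%E.

Definition Pminus (R : realType) (n : nat) : \bar R :=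
  if n == 1%N then +oo%E else ((pdiv n)%:R)%:E.

(** Write [alpha / beta = a / q] in lowest terms.  As [alpha / beta > 1] is not
    an integer, [1 < q < a], so [H(alpha / beta) = a] and the bracket condition
    [a / alpha <= a / q] says [q <= alpha].  From [m alpha = n beta] we get
    [m a = n q], hence [q] divides [m] by coprimality, and so
    [P^-(m) <= q <= alpha]. *)
From HB Require Import structures.
From mathcomp Require Import all_boot all_order all_algebra.
From mathcomp Require Import boolp classical_sets reals constructive_ereal.
Set Implicit Arguments. Unset Strict Implicit. Unset Printing Implicit Defensive.
Import Order.TTheory GRing.Theory Num.Theory.
Local Open Scope ring_scope.

Section ReducedRepresentation.
Variable R : realType.

Lemma height_spec (rho : R) :
  height rho = +oo%E \/
  exists a q, reduced_rep rho (a, q) /\ height rho = ((maxn a q)%:R)%:E.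
Proof.
rewrite /height; destruct pselect as [ex|]; last by left.
by right; move: (xgetPex (0%N, 0%N) ex); case: xget => a q rep; exists a, q.
Qed.

Lemma reduced_rep_den_gt1 (rho : R) (a q : nat) :
  ~ (exists k : nat, (0 < k)%N /\ rho = k%:R) ->
  reduced_rep rho (a, q) -> (1 < q)%N.
Proof.
move=> not_nat [/= a_gt0 [q_gt0 [_ rho_aq]]].
rewrite ltn_neqAle eq_sym q_gt0 andbT; apply/eqP => q1.
by apply: not_nat; exists a; rewrite rho_aq q1 divr1.
Qed.

Lemma reduced_rep_den_lt_num (rho : R) (a q : nat) :
  1 < rho -> reduced_rep rho (a, q) -> (q < a)%N.
Proof.
move=> rho_gt1 [/= _ [q_gt0 [_ rho_aq]]]; move: rho_gt1.
by rewrite rho_aq ltr_pdivlMr ?ltr0n // mul1r ltr_nat.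
Qed.

Lemma reduced_rep_dvd (rho : R) (a q m n : nat) :
  reduced_rep rho (a, q) -> m%:R * rho = n%:R -> (q %| m)%N.
Proof.
move=> [/= _ [q_gt0 [coqa ->]]] eq_mn.
have q_neq0 : q%:R != 0 :> R by rewrite pnatr_eq0 -lt0n.
have /eqP : (m * a)%:R = (n * q)%:R :> R.
  by rewrite !natrM -eq_mn mulrA divfK.
rewrite eqr_nat => /eqP eq_ma.
by rewrite -(Gauss_dvdl _ (etrans (coprime_sym q a) coqa)) eq_ma dvdn_mull.
Qed.

End ReducedRepresentation.

Lemma Pminus_le_dvd (R : realType) (d m : nat) :
  (1 < d)%N -> (d %| m)%N -> (Pminus R m <= (d%:R)%:E)%E.
Proof.
move=> d_gt1 d_m; rewrite /Pminus; case: eqP => [m1|_].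
  by move: d_m; rewrite m1 dvdn1 => /eqP d1; rewrite d1 in d_gt1.
by rewrite lee_fin ler_nat pdiv_min_dvd.
Qed.

Lemma bracket_le_ratio (R : realType) (alpha beta : R) :
  0 < beta -> beta < alpha -> (bracket alpha beta <= (alpha / beta)%:E)%E ->
  exists a q, reduced_rep (alpha / beta) (a, q) /\ q%:R <= alpha.
Proof.
move=> beta_gt0 lt_ba bracket_le.
have alpha_gt0 : 0 < alpha by apply: lt_trans lt_ba.
have max_ab : Num.max alpha beta = alpha by apply/max_idPl/ltW.
move: bracket_le; rewrite /bracket max_ab.
have [->|[a [q [rep ->]]]] := height_spec (alpha / beta).
  by rewrite gt0_mulye ?lte_fin ?invr_gt0 // leNgt ltey.
have ratio_gt1 : 1 < alpha / beta by rewrite ltr_pdivlMr // mul1r.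
have lt_qa := reduced_rep_den_lt_num ratio_gt1 rep.
have [/= a_gt0 [q_gt0 [_ ratio]]] := rep.
move=> bracket_le; exists a, q; split => //; move: bracket_le.
rewrite (maxn_idPl (ltnW lt_qa)) -EFinM lee_fin ratio.
by rewrite ler_pM2l ?ltr0n // lef_pV2 ?posrE ?ltr0n.
Qed.

Theorem lemma2p7 (R : realType) (alpha beta : R) :
  beta < alpha -> 1 <= beta ->
  ~ (exists k : nat, (0 < k)%N /\ alpha / beta = k%:R) ->
  (bracket alpha beta <= (alpha / beta)%:E)%E ->
  ~ (exists m n : nat, [/\ (0 < m)%N, (0 < n)%N,
        m%:R * alpha = n%:R * beta & (alpha%:E < Pminus R m)%E]).
Proof.
move=> lt_ba beta_ge1 not_nat bracket_le [m [n [_ _ eq_mn P_gt]]].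
have beta_gt0 : 0 < beta := lt_le_trans ltr01 beta_ge1.
have [a [q [rep q_le]]] := bracket_le_ratio beta_gt0 lt_ba bracket_le.
have q_gt1 := reduced_rep_den_gt1 not_nat rep.
have q_m : (q %| m)%N.
  by apply: (reduced_rep_dvd rep); rewrite mulrA eq_mn mulfK ?gt_eqF.
have := lt_le_trans P_gt (Pminus_le_dvd R q_gt1 q_m).
by rewrite lte_fin ltNge q_le.
Qed.
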